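(* Let $\Sigma$ be a finite predictive theory and $A \Rightarrow B$ a predictive formula. Then the procedure PseudoLinClosure executed with arguments $\Sigma$, $A$ and $\mathit{Max} = u(B)$ terminates after finitely many steps, and for its returned value $M$ we have $\Sigma \vdash A \Rightarrow B$ if and only if $B \subseteq M$.
   Context: $Y$ is a non-empty finite set of attributes and $\mathcal{T}_Y = \{y^i \mid y \in Y, i \in \mathbb{Z}\}$; $M + j = \{y^{i+j} \mid y^i \in M\}$. A formula is $A \Rightarrow B$ with $A,B$ finite subsets of $\mathcal{T}_Y$; a theory is a set of formulas. For finite non-empty $M$, $l(M) = \min\{i \mid y^i \in M\}$, $u(M) = \max\{i \mid y^i \in M\}$. $A \Rightarrow B$ is predictive if $A,B \neq \emptyset$ and $i \le j$ for all $x^i \in A$, $y^j \in B$; a theory is predictive if all its formulas are. Deduction rules (for finite $A,B,C,D$, $i \in \mathbb{Z}$): (Ax) infer $A \cup B \Rightarrow A$; (Cut) from $A \Rightarrow B$ and $B \cup C \Rightarrow D$ infer $A \cup C \Rightarrow D$; (Shf) from $A \Rightarrow B$ infer $A+i \Rightarrow B+i$; $\Sigma \vdash A \Rightarrow B$ means a finite sequence ending with $A \Rightarrow B$ exists whose members are in $\Sigma$ or follow from earlier members by these rules. Procedure PseudoLinClosure$(\Sigma, A, \mathit{Max})$: for every $E \Rightarrow F \in \Sigma$ and every integer $i$ with $l(A)-l(E) \le i \le \mathit{Max}-l(F)$, set $\mathit{count}[E \Rightarrow F, i] := |E|$ and, for every $y^j \in E$, add the pair $\langle E \Rightarrow F,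 i\rangle$ to the list $\mathit{list}[y^{i+j}]$ (all lists initially empty). Set $M := A$ and $\mathit{update} := A$. While $\mathit{update} \neq \emptyset$: choose $y^i \in \mathit{update}$, remove it from $\mathit{update}$, and for every $\langle E \Rightarrow F, j\rangle \in \mathit{list}[y^i]$ decrement $\mathit{count}[E \Rightarrow F, j]$ by one; if it becomes $0$, put $\mathit{new} := (F+j) \setminus M$, $M := M \cup \mathit{new}$, $\mathit{update} := \mathit{update} \cup \mathit{new}$. Finally return $M$. *)

From HB Require Import structures.
From mathcomp Require Import all_boot all_order all_algebra finmap.
From Stdlib Require Import Relations.
Set Implicit Arguments. Unset Strict Implicit. Unset Printing Implicit Defensive.
Import Order.TTheory GRing.Theory Num.Theory.
Local Open Scope fset_scope.
Local Open Scope ring_scope.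

Section Defs.
Variable Y : finType.

(* temporal attribute y^i is the pair (y, i) *)
Definition tattr := (Y * int)%type.

Definition formula := ({fset tattr} * {fset tattr})%type.

Definition shift (M : {fset tattr}) (j : int) : {fset tattr} :=
  [fset (x.1, x.2 + j) | x in M].

(* l(M), u(M) (only meaningful for non-empty M) *)
Definition lowM (M : {fset tattr}) : int :=
  let s := [seq x.2 | x <- enum_fset M] in foldr Num.min (head 0 s) s.
Definition uppM (M : {fset tattr}) : int :=
  let s := [seq x.2 | x <- enum_fset M] in foldr Num.max (head 0 s) s.

Definition predictive (f : formula) : Prop :=
  f.1 != fset0 /\ f.2 != fset0 /\
  forall x y, x \in f.1 -> y \in f.2 -> x.2 <= y.2.

Definition predictive_theory (S : {fset formula}) : Prop :=
  forall f, f \in S -> predictive f.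

Inductive derivable (S : {fset formula}) : formula -> Prop :=
| der_hyp f : f \in S -> derivable S f
| der_ax (A B : {fset tattr}) : derivable S (A `|` B, A)
| der_cut (A B C D : {fset tattr}) :
    derivable S (A, B) -> derivable S (B `|` C, D) -> derivable S (A `|` C, D)
| der_shf (A B : {fset tattr}) (i : int) :
    derivable S (A, B) -> derivable S (shift A i, shift B i).

(* keys of count / entries of lists: pairs <E => F, i> *)
Definition key := (formula * int)%type.

Definition irange (lo hi : int) : seq int :=
  [seq i <- mkseq (fun k => lo + k%:Z) (absz (hi - lo + 1)) | i <= hi].

Definition keys (S : {fset formula}) (A : {fset tattr}) (Max : int) : {fset key} :=
  \bigcup_(f <- S) [fset (f, i) | i in irange (lowM A - lowM f.1) (Max - lowM f.2)].

Definition count0 (S : {fset formula}) (A : {fset tattr}) (Max : int)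
  (p : key) : int :=
  if p \in keys S A Max then (#|` p.1.1 |)%:Z else 0.

(* list[z]: the pairs <E => F, i> added to the list of z, i.e. those with
   z = y^(i+j) for some y^j in E *)
Definition plist (S : {fset formula}) (A : {fset tattr}) (Max : int)
  (z : tattr) : {fset key} :=
  [fset p in keys S A Max | z \in shift p.1.1 p.2].

(* State of the while loop.  [pend] holds the entries of list[y^i] not yet
   processed for the currently chosen element y^i. *)
Record pstate := PState {
  st_count : key -> int;
  st_M : {fset tattr};
  st_update : {fset tattr};
  st_pend : {fset key}
}.

Definition init_state (S : {fset formula}) (A : {fset tattr}) (Max : int) :=
  PState (count0 S A Max) A A fset0.

(* one elementary step of the loop (nondeterministic choices) *)
Inductive pstep (S : {fset formula}) (A : {fset tattr}) (Max : int) :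
  pstate -> pstate -> Prop :=
| step_choose (c : key -> int) (M U : {fset tattr}) (z : tattr) :
    z \in U ->
    pstep S A Max (PState c M U fset0)
                  (PState c M (U `\ z) (plist S A Max z))
| step_process (c : key -> int) (M U : {fset tattr}) (P : {fset key}) (p : key) :
    p \in P ->
    let c' := fun q => if q == p then c p - 1 else c q in
    let new := if c p - 1 == 0 then shift p.1.2 p.2 `\` M else fset0 in
    pstep S A Max (PState c M U P)
                  (PState c' (M `|` new) (U `|` new) (P `\ p)).

Definition final_state (s : pstate) : Prop :=
  st_update s = fset0 /\ st_pend s = fset0.

End Defs.

(* Along every run, Sigma |- A => M, and the counter of a pair <E => F, i> is the
   number of attributes of E + i not yet taken out of [update], plus one while the
   pair is pending.  So F + i is added only once E + i is contained in M, and it is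
   then derivable from A => M by the shifted hypothesis; this gives the "if"
   direction.  Every step decreases a lexicographic measure, hence termination.
   Conversely, on termination, M together with all attributes above Max is closed
   under every shift E + j => F + j of a formula of Sigma: by predictivity the
   shifts outside the window l(A) - l(E) <= j <= Max - l(F) are harmless, and inside
   it the counter has reached 0.  Closure is preserved by (Ax), (Cut) and (Shf), so
   Sigma |- A => B forces B to lie in M, as u(B) = Max. *)

From HB Require Import structures.
From mathcomp Require Import all_boot all_order all_algebra finmap zify.
From Stdlib Require Import Relations.
Set Implicit Arguments. Unset Strict Implicit. Unset Printing Implicit Defensive.
Import Order.TTheory GRing.Theory Num.Theory.
Local Open Scope fset_scope.
Local Open Scope ring_scope.

Section FoldMinMax.
Variable R : realDomainType.
Implicit Types (s : seq R) (a x : R).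

Lemma foldr_min_le s a x : x \in a :: s -> foldr Num.min a s <= x.
Proof.
elim: s x => [|y s IH] x /=; first by rewrite inE => /eqP ->.
rewrite !inE ge_min => /or3P[/eqP->|/eqP->|xs].
- by rewrite IH ?orbT // inE eqxx.
- by rewrite lexx.
- by rewrite IH ?orbT // inE xs orbT.
Qed.

Lemma foldr_max_ge s a x : x \in a :: s -> x <= foldr Num.max a s.
Proof.
elim: s x => [|y s IH] x /=; first by rewrite inE => /eqP ->.
rewrite !inE le_max => /or3P[/eqP->|/eqP->|xs].
- by rewrite IH ?orbT // inE eqxx.
- by rewrite lexx.
- by rewrite IH ?orbT // inE xs orbT.
Qed.

Lemma mem_foldr_min s a : foldr Num.min a s \in a :: s.
Proof.
elim: s => [|y s IH] /=; first by rewrite inE.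
rewrite minEle; case: ifP => _; first by rewrite !inE eqxx orbT.
by move: IH; rewrite !inE => /orP[->|->]; rewrite ?orbT.
Qed.

End FoldMinMax.

Lemma mem_irange (lo hi i : int) : (i \in irange lo hi) = (lo <= i <= hi).
Proof.
rewrite /irange mem_filter /mkseq; apply/idP/idP.
  by move=> /andP[ih /mapP[k _ ik]]; move: ih; rewrite ik; lia.
move=> /andP[h1 h2]; rewrite h2 /=; apply/mapP; exists (absz (i - lo)).
  by rewrite mem_iota add0n; lia.
lia.
Qed.

Section TemporalSets.
Variable Y : finType.
Implicit Types (M : {fset tattr Y}) (x : tattr Y).

Lemma lowM_le M x : x \in M -> lowM M <= x.2.
Proof. by move=> xM; apply: foldr_min_le; rewrite inE map_f ?orbT. Qed.

Lemma uppM_ge M x : x \in M -> x.2 <= uppM M.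
Proof. by move=> xM; apply: foldr_max_ge; rewrite inE map_f ?orbT. Qed.

Lemma lowM_mem M : M != fset0 -> exists2 x, x \in M & x.2 = lowM M.
Proof.
rewrite /lowM => /fset0Pn[x0 x0M]; set s := [seq x.2 | x <- enum_fset M].
have x0s : x0.2 \in s by apply: map_f.
suff /mapP[x xM ->] : foldr Num.min (head 0 s) s \in s by exists x.
have := mem_foldr_min s (head 0 s); rewrite inE => /orP[/eqP->|//].
by case: s x0s => [|y s] //= _; rewrite inE eqxx.
Qed.

Lemma mem_shift M j x : (x \in shift M j) = ((x.1, x.2 - j) \in M).
Proof.
apply/imfsetP/idP => [[y yM ->]|xM] /=.
  by rewrite addrK -surjective_pairing.
by exists (x.1, x.2 - j) => //=; rewrite subrK -surjective_pairing.
Qed.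

Lemma mem_shift_add M j x : ((x.1, x.2 + j) \in shift M j) = (x \in M).
Proof. by rewrite mem_shift /= addrK -surjective_pairing. Qed.

Lemma card_shift M j : #|` shift M j| = #|` M|.
Proof. by rewrite card_imfset // => -[a b] [c d] /= [-> /addIr ->]. Qed.

End TemporalSets.

Section Derivations.
Variables (Y : finType) (S : {fset formula Y}).
Implicit Types (C D E : {fset tattr Y}).

Lemma der_sub C D D' : derivable S (C, D) -> D' `<=` D -> derivable S (C, D').
Proof.
move=> hCD /fsetUidPr DD'.
have hD : derivable S (D `|` fset0, D') by rewrite fsetU0 -[X in (X, _)]DD'; exact: der_ax.
by have := der_cut hCD hD; rewrite fsetU0.
Qed.

Lemma der_trans C D E : derivable S (C, D) -> derivable S (D, E) -> derivable S (C, E).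
Proof.
move=> hCD hDE; rewrite -(fsetU0 D) in hDE.
by have := der_cut hCD hDE; rewrite fsetU0.
Qed.

Lemma der_fsetU C D E :
  derivable S (C, D) -> derivable S (C, E) -> derivable S (C, D `|` E).
Proof.
move=> hCD hCE.
have hED : derivable S (E `|` D, D `|` E).
  by rewrite fsetUC -[X in (X, _)]fsetU0; exact: der_ax.
have hCDE : derivable S (D `|` C, D `|` E) by rewrite fsetUC; apply: der_cut hCE hED.
by have := der_cut hCD hCDE; rewrite fsetUid.
Qed.

Definition closed_under (N : pred (tattr Y)) (f : formula Y) :=
  forall j : int, {in f.1, forall x, N (x.1, x.2 + j)} ->
                  {in f.2, forall x, N (x.1, x.2 + j)}.

Lemma derivable_closed N f :
  {in S, forall g, closed_under N g} -> derivable S f -> closed_under N f.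
Proof.
move=> hS; elim=> {f} [f /hS //| C D j hC x xC | C D E F _ IH1 _ IH2 j hCE
                       | C D i _ IH j hC x].
- by apply: hC; rewrite inE xC.
- apply: IH2 => y; rewrite inE => /orP[yD|yE]; last by apply: hCE; rewrite inE yE orbT.
  by apply: IH1 yD => z zC; apply: hCE; rewrite inE zC.
- rewrite /= mem_shift => xD.
  have := IH (i + j) _ _ xD; rewrite /= addrA subrK; apply => y yC.
  by rewrite addrA; have := hC (y.1, y.2 + i); rewrite mem_shift_add; apply.
Qed.

End Derivations.

Lemma in_if_fsetD (T : choiceType) (b : bool) (X M : {fset T}) x :
  (x \in if b then X `\` M else fset0) = b && (x \notin M) && (x \in X).
Proof. by case: b; rewrite ?inE. Qed.

Section Loop.
Variables (Y : finType) (S : {fset formula Y}) (A : {fset tattr Y}) (Max : int).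
Hypothesis HS : predictive_theory S.
Local Notation K := (keys S A Max).
Local Notation step := (pstep S A Max).

Lemma mem_keys (p : key Y) :
  (p \in K) = (p.1 \in S) && (lowM A - lowM p.1.1 <= p.2 <= Max - lowM p.1.2).
Proof.
rewrite -mem_irange; apply/bigfcupP/andP => [[f /andP[fS _] /imfsetP[i + ->]] //|].
by case: p => f i [fS fi]; exists f; [rewrite fS | apply/imfsetP; exists i].
Qed.

Lemma keys_hyp p : p \in K -> derivable S (shift p.1.1 p.2, shift p.1.2 p.2).
Proof.
rewrite mem_keys => /andP[pS _]; apply: der_shf.
by case: p.1 pS => E F; apply: der_hyp.
Qed.

Lemma keys_conclusion_low p x : p \in K -> x \in shift p.1.2 p.2 -> lowM A <= x.2.
Proof.
rewrite mem_keys mem_shift => /andP[/HS[E0 [_ hEF]] /andP[hlo _]] xF.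
have [e eE el] := lowM_mem E0; have := hEF _ _ eE xF; rewrite /= lerBrDr => ex.
by apply: le_trans ex; rewrite addrC -lerBlDr el.
Qed.

(* the attributes of E + i whose occurrence has not yet decremented the counter *)
Definition unprocessed (s : pstate Y) (p : key Y) : {fset tattr Y} :=
  shift p.1.1 p.2 `\` (st_M s `\` st_update s).

Record loop_inv (s : pstate Y) : Prop := {
  inv_pend : st_pend s `<=` K;
  inv_update : st_update s `<=` st_M s;
  inv_start : A `<=` st_M s;
  inv_derivable : derivable S (A, st_M s);
  inv_count : {in K, forall p,
     st_count s p = (#|` unprocessed s p|)%:Z + (p \in st_pend s : nat)%:Z};
  inv_count0 : {in K, forall p, st_count s p = 0 -> shift p.1.2 p.2 `<=` st_M s};
  inv_low : {in st_M s, forall x, lowM A <= x.2} }.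

Lemma loop_inv_init : loop_inv (init_state S A Max).
Proof.
split => //=.
- by rewrite -[X in (X, _)]fsetUid; apply: der_ax.
- move=> p pK; rewrite /count0 pK addr0 -(card_shift p.1.1 p.2).
  by congr (Posz #|` _|); apply/fsetP => x; rewrite !inE andNb.
- move=> p pK; rewrite /count0 pK => /eqP; rewrite eqz_nat cardfs_eq0.
  by move: pK; rewrite mem_keys => /andP[/HS[/negPf -> _] _].
- by move=> x; apply: lowM_le.
Qed.

Lemma plist_keys z : plist S A Max z `<=` K.
Proof. by apply/fsubsetP => q; rewrite inE => /andP[]. Qed.

Lemma loop_inv_choose c M U z : z \in U ->
  loop_inv (PState c M U fset0) -> loop_inv (PState c M (U `\ z) (plist S A Max z)).
Proof.
move=> zU [/= PK UM AM derM cnt cnt0 low]; have zM : z \in M := fsubsetP UM z zU.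
split => //=.
- exact: plist_keys.
- exact: fsubset_trans (fsubD1set _ _) UM.
- move=> q qK; rewrite cnt //=.
  rewrite addr0 (cardfsD1 z) PoszD addrC; congr (Posz _ + Posz (nat_of_bool _)).
    congr #|` _|; apply/fsetP => x; rewrite !inE /=.
    by case: (eqVneq x z) => [->|_] /=; rewrite ?zM ?andbF.
  by rewrite !inE qK zU.
Qed.

Lemma unprocessed_eq0 s p :
  unprocessed s p = fset0 -> shift p.1.1 p.2 `<=` st_M s.
Proof.
move=> unp0; apply/fsubsetP => x xE; apply: contraT => xM.
have : x \in unprocessed s p by rewrite !inE xE (negPf xM) andbF.
by rewrite unp0.
Qed.

Lemma unprocessed_fsetU c c' M U P P' N p : {in N, forall x, x \notin M} ->
  unprocessed (PState c' (M `|` N) (U `|` N) P') p = unprocessed (PState c M U P) p.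
Proof.
move=> NM; apply/fsetP => x; rewrite !inE /=.
by case xN: (x \in N); rewrite ?orbF ?orbT // (negPf (NM _ xN)) andbF.
Qed.

Lemma der_apply_key M p : p \in K -> derivable S (A, M) -> shift p.1.1 p.2 `<=` M ->
  derivable S (A, M `|` shift p.1.2 p.2).
Proof.
move=> pK hM EM.
exact: der_fsetU hM (der_trans (der_sub hM EM) (keys_hyp pK)).
Qed.

Lemma loop_inv_process c M U P p : p \in P ->
  let c' := fun q => if q == p then c p - 1 else c q in
  let new := if c p - 1 == 0 then shift p.1.2 p.2 `\` M else fset0 in
  loop_inv (PState c M U P) -> loop_inv (PState c' (M `|` new) (U `|` new) (P `\ p)).
Proof.
move=> pP c' new I; have pK : p \in K := fsubsetP (inv_pend I) p pP.
have newE x : (x \in new) = (c p - 1 == 0) && (x \notin M) && (x \in shift p.1.2 p.2).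
  exact: in_if_fsetD.
have unpE q : unprocessed (PState c' (M `|` new) (U `|` new) (P `\ p)) q =
              unprocessed (PState c M U P) q.
  by apply: unprocessed_fsetU => x; rewrite newE => /andP[/andP[]].
have cp : c p - 1 = (#|` unprocessed (PState c M U P) p|)%:Z.
  by have /= -> := inv_count I pK; rewrite pP addrK.
split => /=.
- exact: fsubset_trans (fsubD1set _ _) (inv_pend I).
- exact: fsetSU (inv_update I).
- exact: fsubset_trans (inv_start I) (fsubsetUl _ _).
- rewrite /new; case: ifP => [c0|_]; last by rewrite fsetU0; apply: inv_derivable I.
  apply: der_sub (fsetUS _ (fsubsetDl _ _)); apply: der_apply_key pK (inv_derivable I) _.
  by apply: unprocessed_eq0; apply: cardfs0_eq; move: c0; rewrite cp eqz_nat => /eqP.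
- move=> q qK; rewrite unpE in_fsetD1 /c'; have /= cq := inv_count I qK.
  by case: eqVneq => [->|_] /=; rewrite ?cp ?addr0.
- move=> q qK; rewrite /c'; case: eqVneq => [->|_] c0.
    by apply/fsubsetP => x xF; rewrite !inE newE c0 eqxx xF andbT orbN.
  exact: fsubset_trans (inv_count0 I qK c0) (fsubsetUl _ _).
- move=> x; rewrite inE newE => /orP[xM|/andP[_ xF]]; first exact: (inv_low I).
  exact: keys_conclusion_low pK xF.
Qed.

Lemma loop_inv_step s s' : step s s' -> loop_inv s -> loop_inv s'.
Proof.
by case=> [c M U z zU | c M U P p pP]; [apply: loop_inv_choose | apply: loop_inv_process].
Qed.

Lemma loop_inv_reachable s :
  clos_refl_trans _ step (init_state S A Max) s -> loop_inv s.
Proof.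
move=> run; elim: run loop_inv_init => // [s1 s2 /loop_inv_step //|s1 s2 s3 _ IH1 _ IH2].
by move=> /IH1 /IH2.
Qed.

End Loop.

Section Termination.
Variables (Y : finType) (S : {fset formula Y}) (A : {fset tattr Y}) (Max : int).
Local Notation K := (keys S A Max).
Local Notation step := (pstep S A Max).

Definition attainable : {fset tattr Y} := A `|` \bigcup_(q <- K) shift q.1.2 q.2.

(* Lexicographic in (attainable attributes missing from M, |update|, |pend|):
   k attributes entering M release k (|K| + 2), which pays for adding them to
   [update]; removing one attribute from [update] pays for the at most |K| pairs
   it makes pending. *)
Definition loop_measure (s : pstate Y) : nat :=
  (#|` attainable `\` st_M s| * (#|` K|).+2 + #|` st_update s| * (#|` K|).+1
   + #|` st_pend s|)%N.

Lemma pend_keys_step s s' : step s s' -> st_pend s `<=` K -> st_pend s' `<=` K.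
Proof.
case=> [c M U z _ _ | c M U P p _ c' new PK] /=; first exact: plist_keys.
exact: fsubset_trans (fsubD1set _ _) PK.
Qed.

Lemma loop_measure_choose c M U z : z \in U ->
  (loop_measure (PState c M (U `\ z) (plist S A Max z))
   < loop_measure (PState c M U fset0))%N.
Proof.
move=> zU; rewrite /loop_measure /= (cardfsD1 z U) zU addn0 add1n mulSn.
rewrite -addnA ltn_add2l [X in (_ < X)%N]addnC ltn_add2l ltnS.
exact: fsubset_leq_card (plist_keys S A Max z).
Qed.

Lemma loop_measure_process c c' M U P N p :
  p \in P -> P `<=` K -> N `<=` shift p.1.2 p.2 `\` M ->
  (loop_measure (PState c' (M `|` N) (U `|` N) (P `\ p))
   < loop_measure (PState c M U P))%N.
Proof.
move=> pP PK NF.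
have NW : N `<=` attainable `\` M.
  apply/fsubsetP => x /(fsubsetP NF); rewrite !inE => /andP[-> xF] /=.
  by apply/orP; right; apply/bigfcupP; exists p; rewrite ?(fsubsetP PK p pP).
have k_le := fsubset_leq_card NW.
have U_le : (#|` U `|` N| <= #|` U| + #|` N|)%N by rewrite cardfsU leq_subr.
rewrite /loop_measure /= -fsetDDl (cardfsDS NW) (cardfsD1 p P) pP.
move: k_le U_le; move: #|` _ `\` M| #|` N| #|` U `|` N| #|` U| #|` P `\ p| #|` K|.
move=> D k U' U0 P0 n k_le U_le.
have -> : (D * n.+2 = (D - k) * n.+2 + k * n.+2)%N by rewrite -mulnDl subnK.
have : (U' * n.+1 <= U0 * n.+1 + k * n.+1)%N by rewrite -mulnDl leq_mul2r U_le orbT.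
have : (k * n.+1 <= k * n.+2)%N by rewrite leq_mul2l leqnSn orbT.
move: ((D - k) * n.+2)%N (U' * n.+1)%N (U0 * n.+1)%N (k * n.+1)%N (k * n.+2)%N; lia.
Qed.

Lemma loop_measure_step s s' : step s s' -> st_pend s `<=` K ->
  (loop_measure s' < loop_measure s)%N.
Proof.
case=> [c M U z zU _ | c M U P p pP c' new PK]; first exact: loop_measure_choose.
apply: loop_measure_process pP PK _.
by rewrite /new; case: ifP => _; rewrite ?fsub0set.
Qed.

Lemma loop_acc s : st_pend s `<=` K -> Acc (fun s' s => step s s') s.
Proof.
have [n] := ubnP (loop_measure s); elim: n s => [|n IH] s lt_s PK.
  by rewrite ltn0 in lt_s.
constructor => s' st; apply: IH (pend_keys_step st PK).
exact: leq_trans (loop_measure_step st PK) lt_s.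
Qed.

End Termination.

Section Completeness.
Variables (Y : finType) (S : {fset formula Y}) (A : {fset tattr Y}) (Max : int).
Hypothesis HS : predictive_theory S.
Hypothesis lowA_le_Max : lowM A <= Max.

(* Attributes above [Max] are made true: this disposes of the shifts beyond the
   window, and costs nothing since u(B) = Max. *)
Definition final_model (M : {fset tattr Y}) : pred (tattr Y) :=
  fun x => (x \in M) || (Max < x.2).

Lemma final_model_closed s : loop_inv S A Max s -> final_state s ->
  {in S, forall g, closed_under (final_model (st_M s)) g}.
Proof.
case: s => c M U P I [/= U0 P0]; subst U P.
move=> g gS j hE x xF; have [E0 [F0 hEF]] := HS gS.
have [e eE el] := lowM_mem E0; have [f fF fl] := lowM_mem F0.
have jlo : lowM A - lowM g.1 <= j.
  rewrite lerBlDr addrC -el.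
  by case/orP: (hE e eE) => [/(inv_low I) | /(le_lt_trans lowA_le_Max) /ltW].
have [jhi | jle] := ltP (Max - lowM g.2) j.
  apply/orP; right; apply: lt_le_trans (_ : lowM g.2 + j <= _).
    by rewrite addrC -ltrBlDr.
  by rewrite lerD2r; apply: lowM_le xF.
have gK : (g, j) \in keys S A Max by rewrite mem_keys gS jlo jle.
have EM : shift g.1 j `<=` M.
  apply/fsubsetP => y; rewrite mem_shift => yE.
  have /orP[|Max_y] := hE _ yE; first by rewrite /= subrK -surjective_pairing.
  have := hEF _ _ yE fF; rewrite /= fl lerBlDr => y_le.
  have j_le : lowM g.2 + j <= Max by rewrite addrC -lerBrDr.
  by move: Max_y; rewrite /= subrK ltNge (le_trans y_le j_le).
have c0 : c (g, j) = 0.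
  have /= -> := inv_count I gK; apply/eqP; rewrite addr0 eqz_nat cardfs_eq0.
  by rewrite /unprocessed /= fsetD0 fsetD_eq0.
by apply/orP; left; apply: (fsubsetP (inv_count0 I gK c0)); rewrite mem_shift_add.
Qed.

Lemma loop_complete s B : loop_inv S A Max s -> final_state s ->
  derivable S (A, B) -> {in B, forall b, b.2 <= Max} -> B `<=` st_M s.
Proof.
move=> I fin /(derivable_closed (final_model_closed I fin)) /(_ 0) hB BMax.
have hA : {in A, forall x, final_model (st_M s) (x.1, x.2 + 0)}.
  by move=> x xA; rewrite /final_model addr0 -surjective_pairing (fsubsetP (inv_start I)).
apply/fsubsetP => b bB; have := hB hA b bB.
by rewrite /final_model addr0 -surjective_pairing ltNge BMax // orbF.
Qed.

End Completeness.

Unset Implicit Arguments.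

Theorem theorem16 (Y : finType) (HY : (0 < #|Y|)%N)
  (S : {fset formula Y}) (A B : {fset tattr Y}) :
  predictive_theory S -> predictive (A, B) ->
  (* termination: every run of the loop from the initial state is finite *)
  Acc (fun s' s => pstep S A (uppM B) s s') (init_state S A (uppM B)) /\
  (* correctness of every returned value *)
  (forall s, clos_refl_trans _ (pstep S A (uppM B)) (init_state S A (uppM B)) s ->
     final_state s ->
     (derivable S (A, B) <-> B `<=` st_M s)).
Proof.
move=> HS [A0 [B0 hAB]]; split; first by apply: loop_acc; rewrite fsub0set.
move=> s run fin; have I := loop_inv_reachable HS run.
split=> [derAB | BM]; last exact: der_sub (inv_derivable I) BM.
have lowA_le_uppB : lowM A <= uppM B.
  have [a aA <-] := lowM_mem A0; have [b bB] := fset0Pn _ B0.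
  exact: le_trans (hAB _ _ aA bB) (uppM_ge bB).
apply: (loop_complete HS lowA_le_uppB I fin derAB) => b; exact: uppM_ge.
Qed.
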